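(* Let $(R,\mathfrak m)$ be either a Noetherian local ring of prime characteristic $p>0$, or a Noetherian $\mathbb N$-graded ring of characteristic $p$ with $R_0$ a field and $\mathfrak m$ its homogeneous maximal ideal. Let $I$ be an ideal of $R$ (homogeneous in the graded case) with $\dim(R/I)=1$. If there is a positive integer $c$ with $\mathfrak m^{cq}\,(I^{[q]})^{\mathrm{sat}}\subseteq I^{[q]}$ for all powers $q$ of $p$, then there is a positive integer $b$ with \[\mathfrak m^{bq}\cap(I^{[q]})^{\mathrm{sat}}=\mathfrak m^{bq}\cap I^{[q]}\] for all powers $q$ of $p$.
   Context: $I^{[q]}$ is the ideal generated by $\{x^q:x\in I\}$. For an ideal $\mathfrak b$, $\mathfrak b^{\mathrm{sat}}=(\mathfrak b:\mathfrak m^\infty)=\bigcup_{n\ge1}(\mathfrak b:\mathfrak m^n)$. *)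

From HB Require Import structures.
From mathcomp Require Import all_boot all_order all_algebra.
Set Implicit Arguments. Unset Strict Implicit. Unset Printing Implicit Defensive.
Import GRing.Theory.
Local Open Scope ring_scope.

Section IdealDefs.
Variable R : comNzRingType.

Definition subP (A B : R -> Prop) : Prop := forall x, A x -> B x.

Definition is_ideal (I : R -> Prop) : Prop :=
  [/\ I 0, (forall x y, I x -> I y -> I (x + y)) & (forall r x, I x -> I (r * x))].

Definition ideal_gen (S : R -> Prop) : R -> Prop :=
  fun x => forall J, is_ideal J -> subP S J -> J x.

Definition unit_ideal : R -> Prop := fun _ => True.

Definition ideal_mul (I J : R -> Prop) : R -> Prop :=
  ideal_gen (fun z => exists a b, [/\ I a, J b & z = a * b]).

Fixpoint ideal_pow (I : R -> Prop) (n : nat) : R -> Prop :=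
  match n with
  | O => unit_ideal
  | S k => ideal_mul (ideal_pow I k) I
  end.

Definition frob_pow (I : R -> Prop) (q : nat) : R -> Prop :=
  ideal_gen (fun z => exists x, I x /\ z = x ^+ q).

Definition colon (b J : R -> Prop) : R -> Prop :=
  fun x => forall y, J y -> b (x * y).

Definition saturation (b m : R -> Prop) : R -> Prop :=
  fun x => exists n, (1 <= n)%N /\ colon b (ideal_pow m n) x.

Definition is_prime_ideal (P : R -> Prop) : Prop :=
  [/\ is_ideal P, ~ P 1 & forall x y, P (x * y) -> P x \/ P y].

Definition is_maximal_ideal (M : R -> Prop) : Prop :=
  [/\ is_ideal M, ~ M 1 &
      forall J, is_ideal J -> subP M J -> (forall x, J x <-> M x) \/ J 1].

Definition noetherian : Prop :=
  forall I, is_ideal I -> exists s : seq R,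
      forall x, I x <-> ideal_gen (fun z => z \in s) x.

Definition local_ring_with (m : R -> Prop) : Prop :=
  is_maximal_ideal m /\
  forall M, is_maximal_ideal M -> forall x, M x <-> m x.

Definition strict_sub (A B : R -> Prop) : Prop :=
  subP A B /\ exists x, B x /\ ~ A x.

(* dim(R/I) = 1 : the primes of R/I are the primes of R containing I;
   there is a chain of length 1 and none of length 2. *)
Definition dim_quotient_eq1 (I : R -> Prop) : Prop :=
  (exists P0 P1, [/\ is_prime_ideal P0, is_prime_ideal P1, subP I P0
                    & strict_sub P0 P1]) /\
  ~ (exists P0 P1 P2, [/\ is_prime_ideal P0, is_prime_ideal P1, is_prime_ideal P2,
                         subP I P0 & strict_sub P0 P1 /\ strict_sub P1 P2]).

(* An N-grading R = (+)_n R_n given by the projections comp n : R -> R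
   onto the homogeneous components. *)
Definition is_N_grading (comp : nat -> R -> R) : Prop :=
  [/\ (forall n x y, comp n (x + y) = comp n x + comp n y),
      (forall n k x, comp n (comp k x) = if n == k then comp k x else 0),
      (forall x, exists N, (forall n, (N <= n)%N -> comp n x = 0) /\
                          x = \sum_(n < N) comp n x),
      (forall i j x y, comp (i + j) (comp i x * comp j y) = comp i x * comp j y)
    & comp 0 1 = 1].

Definition degree0_field (comp : nat -> R -> R) : Prop :=
  forall x, comp 0 x = x -> x != 0 -> exists y, comp 0 y = y /\ x * y = 1.

Definition homogeneous_ideal (comp : nat -> R -> R) (I : R -> Prop) : Prop :=
  forall x n, I x -> I (comp n x).

End IdealDefs.

From HB Require Import structures.
From mathcomp Require Import all_boot all_order all_algebra.
From Stdlib Require Import Classical ClassicalEpsilon FunctionalExtensionality PropExtensionality.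
From mathcomp Require Import ring.
Import GRing.Theory.
Local Open Scope ring_scope.

(* Since dim R/I = 1, prime avoidance (in its homogeneous form in the graded case) yields a
   parameter [x] in [m] with [m^n <= I + (x)].  If [I] has [k] generators, then
   [(I + (x^c))^((k+2)q) <= I^[q] + (x^(cq))], hence [m^(bq) <= I^[q] + (x^(cq))] for
   [b = (n+1)(c+1)(k+2)].  Write [y] in [m^(bq)] and in the saturation of [I^[q]] as
   [j + x^(cq) r] with [j] in [I^[q]]: the cofactor [r] is again in the saturation, so
   [x^(cq) r] lies in [m^(cq) (I^[q])^sat <= I^[q]], and therefore so does [y]. *)

Section IdealAlgebra.
Context {R : comNzRingType}.
Implicit Types (A B C T : R -> Prop) (s : seq R).

Definition ideal_add A B : R -> Prop := fun z => exists a b, [/\ A a, B b & z = a + b].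
Definition principal (a : R) : R -> Prop := fun z => exists r, z = a * r.
Definition ideal_span s : R -> Prop := ideal_gen (fun z => z \in s).

Lemma subP_refl A : subP A A. Proof. by []. Qed.
Lemma subP_trans {A B C} : subP A B -> subP B C -> subP A C.
Proof. by move=> h1 h2 x /h1 /h2. Qed.
Lemma not_subP_exists A B : ~ subP A B -> exists a, A a /\ ~ B a.
Proof.
by move=> nAB; apply: NNPP => H; apply: nAB => a Aa; apply: NNPP => nBa; apply: H; exists a.
Qed.

Section OneIdeal.
Variables (A : R -> Prop) (hA : is_ideal A).

Lemma ideal0 : A 0. Proof. by case: hA. Qed.
Lemma idealD x y : A x -> A y -> A (x + y). Proof. by case: hA => _ h _; apply: h. Qed.
Lemma idealMl r x : A x -> A (r * x). Proof. by case: hA => _ _ h; apply: h. Qed.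
Lemma idealMr r x : A x -> A (x * r). Proof. by rewrite mulrC; apply: idealMl. Qed.
Lemma idealB x y : A x -> A y -> A (x - y).
Proof. by move=> hx hy; apply: idealD => //; rewrite -mulN1r; apply: idealMl. Qed.
Lemma idealXS x k : A x -> A (x ^+ k.+1).
Proof. by rewrite exprSr; apply: idealMl. Qed.
Lemma ideal_sum (I : Type) (r : seq I) (P : pred I) (F : I -> R) :
  (forall i, P i -> A (F i)) -> A (\sum_(i <- r | P i) F i).
Proof. by move=> hF; apply: (big_ind A) => //; [exact: ideal0|exact: idealD]. Qed.

End OneIdeal.

Arguments ideal0 {A}.
Arguments idealD {A} _ {x y}.
Arguments idealMl {A} _ r {x}.
Arguments idealMr {A} _ r {x}.
Arguments idealB {A} _ {x y}.
Arguments idealXS {A} _ {x} k.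
Arguments ideal_sum {A}.

Lemma ideal_gen_ideal (S : R -> Prop) : is_ideal (ideal_gen S).
Proof.
split.
- by move=> J hJ _; apply: ideal0.
- by move=> x y hx hy J hJ hS; apply: idealD => //; [apply: hx|apply: hy].
- by move=> r x hx J hJ hS; apply: idealMl => //; apply: hx.
Qed.
Lemma ideal_gen_sub {S : R -> Prop} : subP S (ideal_gen S).
Proof. by move=> x hx J hJ hS; apply: hS. Qed.
Lemma ideal_gen_min {S : R -> Prop} {T} : is_ideal T -> subP S T -> subP (ideal_gen S) T.
Proof. by move=> hT hS x hx; apply: hx. Qed.

Lemma principal_ideal a : is_ideal (principal a).
Proof.
split; first by exists 0; rewrite mulr0.
- by move=> x y [r ->] [s ->]; exists (r + s); rewrite mulrDr.
- by move=> r x [s ->]; exists (r * s); rewrite mulrCA.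
Qed.
Lemma principal_self a : principal a a. Proof. by exists 1; rewrite mulr1. Qed.
Lemma principal_min {a T} : is_ideal T -> T a -> subP (principal a) T.
Proof. by move=> hT ha x [r ->]; apply: idealMr. Qed.

Lemma ideal_add_ideal {A B} : is_ideal A -> is_ideal B -> is_ideal (ideal_add A B).
Proof.
move=> hA hB; split.
- by exists 0, 0; split; rewrite ?addr0 //; apply: ideal0.
- move=> _ _ [a [b [ha hb ->]]] [a' [b' [ha' hb' ->]]].
  by exists (a + a'), (b + b'); split; [exact: idealD|exact: idealD|rewrite addrACA].
- move=> r _ [a [b [ha hb ->]]].
  by exists (r * a), (r * b); split; [exact: idealMl|exact: idealMl|rewrite mulrDr].
Qed.
Lemma ideal_addl {A B} : is_ideal B -> subP A (ideal_add A B).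
Proof. by move=> hB x hx; exists x, 0; split; rewrite ?addr0 //; apply: ideal0. Qed.
Lemma ideal_addr {A B} : is_ideal A -> subP B (ideal_add A B).
Proof. by move=> hA x hx; exists 0, x; split; rewrite ?add0r //; apply: ideal0. Qed.
Lemma ideal_add_min {A B T} :
  is_ideal T -> subP A T -> subP B T -> subP (ideal_add A B) T.
Proof. by move=> hT hA hB _ [a [b [ha hb ->]]]; apply: idealD => //; [apply: hA|apply: hB]. Qed.
Lemma ideal_add_mono {A B A' B'} :
  subP A A' -> subP B B' -> subP (ideal_add A B) (ideal_add A' B').
Proof. by move=> h1 h2 _ [a [b [ha hb ->]]]; exists a, b; split; [apply: h1|apply: h2|]. Qed.

Lemma ideal_add_principal_l {A} a : is_ideal A -> subP A (ideal_add A (principal a)).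
Proof. by move=> _; apply: ideal_addl; exact: principal_ideal. Qed.
Lemma ideal_add_principal_r {A} a : is_ideal A -> ideal_add A (principal a) a.
Proof. by move=> hA; apply: ideal_addr => //; exact: principal_self. Qed.

Lemma ideal_mul_ideal A B : is_ideal (ideal_mul A B). Proof. exact: ideal_gen_ideal. Qed.
Lemma ideal_mul_in {A B a b} : A a -> B b -> ideal_mul A B (a * b).
Proof. by move=> ha hb; apply: ideal_gen_sub; exists a, b. Qed.
Lemma ideal_mul_min {A B T} : is_ideal T ->
  (forall a b, A a -> B b -> T (a * b)) -> subP (ideal_mul A B) T.
Proof. by move=> hT h; apply: ideal_gen_min => // z [a [b [ha hb ->]]]; apply: h. Qed.
Lemma ideal_mul_mono {A B A' B'} :
  subP A A' -> subP B B' -> subP (ideal_mul A B) (ideal_mul A' B').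
Proof.
move=> h1 h2; apply: ideal_mul_min; first exact: ideal_mul_ideal.
by move=> a b ha hb; apply: ideal_mul_in; [apply: h1|apply: h2].
Qed.
Lemma ideal_mul_subl {A B} : is_ideal A -> subP (ideal_mul A B) A.
Proof. by move=> hA; apply: ideal_mul_min => // a b ha hb; apply: idealMr. Qed.
Lemma ideal_mul_subr {A B} : is_ideal B -> subP (ideal_mul A B) B.
Proof. by move=> hB; apply: ideal_mul_min => // a b ha hb; apply: idealMl. Qed.
Lemma ideal_mulr1 {A} : subP A (ideal_mul A (@unit_ideal R)).
Proof. by move=> x hx; rewrite -[x]mulr1; apply: ideal_mul_in. Qed.

Lemma ideal_mulA_sub {A B C} :
  subP (ideal_mul (ideal_mul A B) C) (ideal_mul A (ideal_mul B C)).
Proof.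
apply: ideal_mul_min; first exact: ideal_mul_ideal.
move=> u z hu hz.
pose T := ideal_mul A (ideal_mul B C).
have hTz : is_ideal (fun v => T (v * z)).
  have hT : is_ideal T := ideal_mul_ideal _ _.
  split; first by rewrite mul0r; exact: (ideal0 hT).
  - by move=> x y hx hy; rewrite mulrDl; exact: (idealD hT).
  - by move=> r x hx; rewrite -mulrA; exact: (idealMl hT).
apply: (ideal_mul_min hTz _ _ hu) => a b ha hb.
by rewrite -mulrA; apply: ideal_mul_in => //; apply: ideal_mul_in.
Qed.

Lemma ideal_pow_ideal A n : is_ideal (ideal_pow A n).
Proof. by case: n => [|n] //=; exact: ideal_mul_ideal. Qed.
Lemma ideal_pow_mono {A B} n : subP A B -> subP (ideal_pow A n) (ideal_pow B n).
Proof. by move=> h; elim: n => [|n IH] //=; apply: ideal_mul_mono. Qed.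
Lemma ideal_pow_leq {A n n'} : is_ideal A -> (n <= n')%N ->
  subP (ideal_pow A n') (ideal_pow A n).
Proof.
move=> hA /subnK <-; elim: (n' - n)%N => [|k IH] //=.
by apply: subP_trans IH; apply: ideal_mul_subl; exact: ideal_pow_ideal.
Qed.
Lemma ideal_pow1 {A} : is_ideal A -> subP (ideal_pow A 1) A.
Proof. by move=> hA; apply: ideal_mul_subr. Qed.
Lemma ideal_pow_exp {A a} k : A a -> ideal_pow A k (a ^+ k).
Proof. by move=> ha; elim: k => [|k IH] //=; rewrite exprSr; apply: ideal_mul_in. Qed.

Lemma ideal_powD A i j :
  subP (ideal_pow A (i + j)) (ideal_mul (ideal_pow A i) (ideal_pow A j)).
Proof.
elim: j => [|j IH]; first by rewrite addn0; apply: ideal_mulr1.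
rewrite addnS /=.
exact: subP_trans (ideal_mul_mono IH (subP_refl _)) ideal_mulA_sub.
Qed.
Lemma ideal_powM A a b : subP (ideal_pow A (a * b)) (ideal_pow (ideal_pow A a) b).
Proof.
elim: b => [|b IH] //; rewrite mulnS addnC.
exact: subP_trans (ideal_powD _ _ _) (ideal_mul_mono IH (subP_refl _)).
Qed.

Lemma principal_pow a k : subP (ideal_pow (principal a) k) (principal (a ^+ k)).
Proof.
elim: k => [|k IH] /=; first by move=> x _; exists x; rewrite expr0 mul1r.
apply: ideal_mul_min; first exact: principal_ideal.
by move=> _ _ /IH [r ->] [s ->]; exists (r * s); rewrite exprSr mulrACA.
Qed.

Lemma ideal_add_mulr {A B A' B' u} c :
  (forall a, A a -> A' (a * c)) -> (forall b, B b -> B' (b * c)) ->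
  ideal_add A B u -> ideal_add A' B' (u * c).
Proof.
move=> hA hB [a [b [ha hb ->]]]; exists (a * c), (b * c).
by split; [exact: hA|exact: hB|rewrite mulrDl].
Qed.

Lemma ideal_pow_add {A B} i j : is_ideal A -> is_ideal B ->
  subP (ideal_pow (ideal_add A B) (i + j)) (ideal_add (ideal_pow A i) (ideal_pow B j)).
Proof.
move=> hA hB.
have hsum i' j' : is_ideal (ideal_add (ideal_pow A i') (ideal_pow B j')) :=
  ideal_add_ideal (ideal_pow_ideal _ _) (ideal_pow_ideal _ _).
elim: i j => [|i IHi] j.
  by move=> x _; exists x, 0; split; rewrite ?addr0 //; exact: (ideal0 (ideal_pow_ideal _ _)).
elim: j => [|j IHj].
  by move=> x _; exists 0, x; split; rewrite ?add0r //; exact: (ideal0 (ideal_pow_ideal _ _)).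
rewrite addSn addnS; apply: (ideal_mul_min (hsum i.+1 j.+1)) => u _ hu [a [b [ha hb ->]]].
rewrite mulrDr; apply: (idealD (hsum _ _)).
- have /IHi hu' : ideal_pow (ideal_add A B) (i + j.+1) u by rewrite addnS.
  apply: ideal_add_mulr hu' => [x hx|y hy]; first exact: ideal_mul_in.
  exact: (idealMr (ideal_pow_ideal _ _)).
- have /IHj hu' : ideal_pow (ideal_add A B) (i.+1 + j) u by rewrite addSn.
  apply: ideal_add_mulr hu' => [x hx|y hy]; last exact: ideal_mul_in.
  exact: (idealMr (ideal_pow_ideal _ _)).
Qed.

Lemma ideal_span_mem {s a} : a \in s -> ideal_span s a.
Proof. by move=> h; apply: ideal_gen_sub. Qed.

Lemma ideal_span_cons a s : subP (ideal_span (a :: s)) (ideal_add (principal a) (ideal_span s)).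
Proof.
apply: ideal_gen_min; first exact: ideal_add_ideal (principal_ideal a) (ideal_gen_ideal _).
move=> z; rewrite inE => /orP[/eqP->|hz].
  by apply: ideal_addl; [exact: ideal_gen_ideal|exact: principal_self].
by apply: ideal_addr; [exact: principal_ideal|exact: ideal_span_mem].
Qed.

Lemma ideal_span_pow {s T q} : is_ideal T -> (forall a, a \in s -> T (a ^+ q)) ->
  subP (ideal_pow (ideal_span s) (size s * q + 1)) T.
Proof.
move=> hT; elim: s => [|a s IH] hs /=.
  by apply: subP_trans (ideal_mul_subr (ideal_gen_ideal _)) _; apply: ideal_gen_min.
rewrite mulSn -addnA.
apply: subP_trans (ideal_pow_mono _ (ideal_span_cons a s)) _.
apply: subP_trans (ideal_pow_add _ _ (principal_ideal _) (ideal_gen_ideal _)) _.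
apply: ideal_add_min => //.
  apply: subP_trans (principal_pow a q) _; apply: principal_min => //; apply: hs; exact: mem_head.
by apply: IH => b hb; apply: hs; rewrite inE hb orbT.
Qed.

(** * Frobenius powers and saturation *)

Lemma frob_pow_ideal (I : R -> Prop) q : is_ideal (frob_pow I q).
Proof. exact: ideal_gen_ideal. Qed.

Lemma ideal_add_principal_pow {I} x c : is_ideal I ->
  subP (ideal_pow (ideal_add I (principal x)) c.+1) (ideal_add I (principal (x ^+ c))).
Proof.
move=> hI; rewrite -add1n.
apply: subP_trans (ideal_pow_add _ _ hI (principal_ideal x)) _.
exact: ideal_add_mono (ideal_pow1 hI) (principal_pow x c).
Qed.

Lemma pow_sub_frob_add_principal {m I s x n q} c :
  is_ideal m -> is_ideal I -> (forall z, I z <-> ideal_span s z) ->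
  subP (ideal_pow m n) (ideal_add I (principal x)) -> (0 < q)%N ->
  subP (ideal_pow m (n.+1 * c.+1 * (size s).+2 * q))
       (ideal_add (frob_pow I q) (principal (x ^+ (c * q)))).
Proof.
move=> hm hI hIs hmn q_gt0.
set T := ideal_add (frob_pow I q) (principal (x ^+ (c * q))).
set G := ideal_span (x ^+ c :: s).
have hT : is_ideal T := ideal_add_ideal (frob_pow_ideal I q) (principal_ideal _).
have m_sub_span : subP (ideal_pow m (n.+1 * c.+1)) G.
  apply: subP_trans (ideal_powM _ _ _) _.
  apply: subP_trans (ideal_pow_mono _ (subP_trans (ideal_pow_leq hm (leqnSn n)) hmn)) _.
  apply: subP_trans (ideal_add_principal_pow _ _ hI) _.
  apply: ideal_add_min; first exact: ideal_gen_ideal.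
    by move=> z /hIs; apply: ideal_gen_min; [exact: ideal_gen_ideal|] => a ha;
      apply: ideal_span_mem; rewrite inE ha orbT.
  by apply: principal_min; [exact: ideal_gen_ideal|apply: ideal_span_mem; exact: mem_head].
have span_sub_T : subP (ideal_pow G ((size s).+1 * q + 1)) T.
  apply: ideal_span_pow hT _ => a; rewrite inE => /orP[/eqP->|ha].
    by apply: ideal_addr; [exact: frob_pow_ideal|rewrite -exprM; exact: principal_self].
  apply: ideal_addl; first exact: principal_ideal.
  by apply: ideal_gen_sub; exists a; split => //; apply/hIs; exact: ideal_span_mem.
rewrite -mulnA; apply: subP_trans (ideal_powM _ _ _) _.
apply: subP_trans (ideal_pow_mono _ m_sub_span) _.
apply: subP_trans (ideal_pow_leq (ideal_gen_ideal _) _) span_sub_T.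
by rewrite [X in (_ <= X)%N]mulSn addnC leq_add2r.
Qed.

Lemma sub_saturation (J m : R -> Prop) : is_ideal J -> subP J (saturation J m).
Proof. by move=> hJ y Jy; exists 1%N; split=> // z _; exact: (idealMr hJ). Qed.

Lemma ideal_mul_preim {T} b : is_ideal T -> is_ideal (fun z => T (b * z)).
Proof.
move=> hT; split.
- by rewrite mulr0; exact: (ideal0 hT).
- by move=> x y hx hy; rewrite mulrDr; exact: (idealD hT).
- by move=> r x hx; rewrite mulrCA; exact: (idealMl hT).
Qed.

Lemma saturation_cofactor {m J : R -> Prop} {z N y} : is_ideal J ->
  subP (ideal_pow m N) (ideal_add J (principal z)) ->
  ideal_pow m N y -> saturation J m y ->
  exists j r, [/\ J j, saturation J m r & y = j + z * r].
Proof.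
move=> hJ hmN /hmN [j [_ [hj [r ->] ->]]] [N1 [N1_gt0 hy]].
exists j, r; split=> //; exists (N1 + N)%N; split; first exact: leq_trans N1_gt0 (leq_addr _ _).
suff key : subP (ideal_mul (ideal_pow m N1) (ideal_pow m N)) (fun w => J (r * w)).
  by move=> w /ideal_powD /key.
apply: (ideal_mul_min (ideal_mul_preim r hJ)) => u _ hu /hmN [j' [_ [hj' [t ->] ->]]].
have -> : r * (u * (j' + z * t)) = (r * u) * j' + ((j + z * r) * u - j * u) * t by ring.
apply: (idealD hJ); first exact: (idealMl hJ).
by apply: (idealMr hJ); apply: (idealB hJ); [exact: hy|exact: (idealMr hJ)].
Qed.

Lemma frob_sat_sub {m I s x n c q} :
  is_ideal m -> is_ideal I -> (forall z, I z <-> ideal_span s z) -> m x ->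
  subP (ideal_pow m n) (ideal_add I (principal x)) -> (0 < q)%N ->
  subP (ideal_mul (ideal_pow m (c * q)) (saturation (frob_pow I q) m)) (frob_pow I q) ->
  forall y, ideal_pow m (n.+1 * c.+1 * (size s).+2 * q) y ->
    saturation (frob_pow I q) m y -> frob_pow I q y.
Proof.
move=> hm hI hIs hx hmn q_gt0 hc y hy ysat.
have hpow := pow_sub_frob_add_principal c hm hI hIs hmn q_gt0.
have [j [r [hj rsat ->]]] := saturation_cofactor (frob_pow_ideal I q) hpow hy ysat.
apply: (idealD (frob_pow_ideal I q) hj); apply: hc.
by apply: ideal_mul_in rsat; exact: ideal_pow_exp.
Qed.

(** * Noetherian rings *)

Lemma uniform_bound {P : nat -> R -> Prop} {s} :
  (forall k l z, (k <= l)%N -> P k z -> P l z) ->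
  (forall z, z \in s -> exists k, P k z) -> exists N, forall z, z \in s -> P N z.
Proof.
move=> Pmono; elim: s => [|a s IH] hs; first by exists 0%N.
have [N hN] := IH (fun z hz => hs z (@mem_behead _ (a :: s) z hz)).
have [k hk] := hs a (mem_head a s).
exists (maxn N k) => z; rewrite inE => /orP[/eqP->|hz].
  exact: Pmono (leq_maxr N k) hk.
exact: Pmono (leq_maxl N k) (hN z hz).
Qed.

Section Noetherian.
Hypothesis noethR : noetherian R.

Lemma noetherian_ascending (ch : nat -> R -> Prop) :
  (forall k, is_ideal (ch k)) -> (forall k, subP (ch k) (ch k.+1)) ->
  exists N, subP (ch N.+1) (ch N).
Proof.
move=> chI chS.
have chmono k l z : (k <= l)%N -> ch k z -> ch l z.
  by move=> /subnK <-; elim: (l - k)%N => [|d IH] // /IH; rewrite addSn; exact: chS.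
pose U z := exists k, ch k z.
have hU : is_ideal U.
  split; first by exists 0%N; exact: (ideal0 (chI 0%N)).
  - move=> x y [i hi] [j hj]; exists (maxn i j); apply: (idealD (chI _)).
      exact: chmono (leq_maxl i j) hi.
    exact: chmono (leq_maxr i j) hj.
  - by move=> r x [i hi]; exists i; exact: (idealMl (chI i)).
have [s hs] := noethR U hU.
have [N hN] := uniform_bound chmono (fun z hz => proj2 (hs z) (ideal_span_mem hz)).
exists N => z hz; have /hs : U z by exists N.+1.
by apply: ideal_gen_min; [exact: chI|exact: hN].
Qed.

Lemma noetherian_maximal (F : (R -> Prop) -> Prop) :
  (forall K, F K -> is_ideal K) -> (exists K, F K) ->
  exists M, F M /\ forall K, F K -> subP M K -> subP K M.
Proof.
move=> FI [K0 FK0]; apply: NNPP => nomax.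
have grow M : F M -> exists K, F K /\ subP M K /\ ~ subP K M.
  move=> FM; apply: NNPP => H; apply: nomax; exists M; split => // K FK MK.
  by apply: NNPP => KM; apply: H; exists K.
pose T := {M : R -> Prop | F M}.
pose f (M : T) : T := let e := constructive_indefinite_description _ (grow _ (proj2_sig M)) in
  exist _ (proj1_sig e) (proj1 (proj2_sig e)).
have fS M : subP (proj1_sig M) (proj1_sig (f M)) /\ ~ subP (proj1_sig (f M)) (proj1_sig M).
  by rewrite /f; case: constructive_indefinite_description => K [? []].
have [N hN] := @noetherian_ascending (fun k => proj1_sig (iter k f (exist _ K0 FK0)))
  (fun k => FI _ (proj2_sig _)) (fun k => proj1 (fS _)).
exact: (proj2 (fS (iter N f (exist _ K0 FK0))) hN).
Qed.

Lemma maximal_avoiding_powers {Adm : (R -> Prop) -> Prop} {K y} :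
  is_ideal K -> Adm K -> (forall k, ~ K (y ^+ k)) ->
  exists Q, [/\ is_ideal Q, Adm Q, subP K Q, (forall k, ~ Q (y ^+ k)) &
    forall a b, Adm (ideal_add Q (principal a)) -> Adm (ideal_add Q (principal b)) ->
      Q (a * b) -> Q a \/ Q b].
Proof.
move=> hK AK Ky.
pose F J := [/\ is_ideal J, Adm J, subP K J & forall k, ~ J (y ^+ k)].
have [Q [[hQ AQ KQ Qy] Qmax]] : exists Q, F Q /\ forall J, F J -> subP Q J -> subP J Q.
  by apply: noetherian_maximal => [J [] //|]; exists K; split.
exists Q; split => // a b Aa Ab hab; apply: NNPP => /not_or_and [Qa Qb].
have hit c : Adm (ideal_add Q (principal c)) -> ~ Q c ->
    exists i, ideal_add Q (principal c) (y ^+ i).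
  move=> Ac Qc; apply: NNPP => H; apply: Qc.
  apply: (Qmax (ideal_add Q (principal c))); last exact: ideal_add_principal_r.
    split=> //; first exact: ideal_add_ideal hQ (principal_ideal c).
      exact: subP_trans KQ (ideal_add_principal_l _ hQ).
    by move=> k hk; apply: H; exists k.
  exact: ideal_add_principal_l.
have [i [q1 [_ [hq1 [r1 ->] e1]]]] := hit a Aa Qa.
have [j [q2 [_ [hq2 [r2 ->] e2]]]] := hit b Ab Qb.
apply: (Qy (i + j)%N); rewrite exprD e1 e2.
have -> : (q1 + a * r1) * (q2 + b * r2) =
    q1 * (q2 + b * r2) + q2 * (a * r1) + (a * b) * (r1 * r2) by ring.
by apply: (idealD hQ); [apply: (idealD hQ); exact: (idealMr hQ)|exact: (idealMr hQ)].
Qed.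

Definition covers_primes_over I (Ps : list (R -> Prop)) :=
  (forall P, List.In P Ps -> is_prime_ideal P /\ subP I P) /\
  forall Q, is_prime_ideal Q -> subP I Q -> exists P, List.In P Ps /\ subP P Q.

(* Noetherian induction: a maximal counterexample [K] is not prime, and for [a * b] in [K]
   with [a], [b] outside, the lists covering [K + (a)] and [K + (b)] can be joined. *)
Lemma finite_primes_cover {I} : is_ideal I -> exists Ps, covers_primes_over I Ps.
Proof.
move=> hI; apply: NNPP => nI.
have [K [[hK nK] Kmax]] : exists K, (is_ideal K /\ ~ exists Ps, covers_primes_over K Ps) /\
    forall J, (is_ideal J /\ ~ exists Ps, covers_primes_over J Ps) -> subP K J -> subP J K.
  by apply: noetherian_maximal => [J [] //|]; exists I.
apply: nK.
have [K1|nK1] := classic (K 1).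
  by exists nil; split => // Q [hQ nQ _] KQ; exfalso; exact/nQ/KQ.
have [pK|npK] := classic (forall a b, K (a * b) -> K a \/ K b).
  exists [:: K]; split => [P [<-|//]|Q _ KQ]; first by do 2?split.
  by exists K; split => //; left.
have [a [b [hab /not_or_and [na nb]]]] : exists a b, K (a * b) /\ ~ (K a \/ K b).
  by apply: NNPP => H; apply: npK => a b hab; apply: NNPP => H2; apply: H; exists a, b.
have grow c : ~ K c -> exists Ps, covers_primes_over (ideal_add K (principal c)) Ps.
  move=> Kc; apply: NNPP => H; apply: Kc; apply: (Kmax (ideal_add K (principal c))).
  - by split => //; exact: ideal_add_ideal hK (principal_ideal c).
  - exact: ideal_add_principal_l.
  - exact: ideal_add_principal_r.
have [La [La1 La2]] := grow a na; have [Lb [Lb1 Lb2]] := grow b nb.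
exists (La ++ Lb)%list; split.
  move=> P /(List.in_app_or La Lb P) [/La1|/Lb1] [pP hP]; split => //;
    exact: subP_trans (ideal_add_principal_l _ hK) hP.
move=> Q pQ KQ; have [hQ _ Qprime] := pQ.
have Qc c : Q c -> subP (ideal_add K (principal c)) Q.
  by move=> hc; apply: ideal_add_min => //; exact: principal_min.
have [/Qc /(La2 Q pQ) [P [hP PQ]]|/Qc /(Lb2 Q pQ) [P [hP PQ]]] := Qprime _ _ (KQ _ hab).
  by exists P; split => //; apply: List.in_or_app; left.
by exists P; split => //; apply: List.in_or_app; right.
Qed.

Lemma pow_sub_of_radical (m K : R -> Prop) : is_ideal m -> is_ideal K ->
  (forall y, m y -> exists k, K (y ^+ k)) -> exists n, subP (ideal_pow m n) K.
Proof.
move=> hm hK mrad; have [s hs] := noethR m hm.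
have Kmono k l z : (k <= l)%N -> K (z ^+ k) -> K (z ^+ l).
  by move=> /subnK <- hz; rewrite exprD; exact: (idealMl hK).
have [k hk] := uniform_bound Kmono (fun z hz => mrad z (proj2 (hs z) (ideal_span_mem hz))).
exists (size s * k + 1)%N.
apply: subP_trans (ideal_pow_mono _ (fun z => proj1 (hs z))) (ideal_span_pow hK hk).
Qed.

Lemma exists_maximal_over {K : R -> Prop} : is_ideal K -> ~ K 1 ->
  exists M, is_maximal_ideal M /\ subP K M.
Proof.
move=> hK nK.
have [M [[hM nM KM] Mmax]] : exists M, [/\ is_ideal M, ~ M 1 & subP K M] /\
    forall J, [/\ is_ideal J, ~ J 1 & subP K J] -> subP M J -> subP J M.
  by apply: noetherian_maximal => [J [] //|]; exists K; split.
exists M; split => //; split => // J hJ MJ.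
have [J1|nJ1] := classic (J 1); [by right|left => z; split; last exact: MJ].
by apply: Mmax => //; split => //; exact: subP_trans KM MJ.
Qed.

Definition dim_quotient_le1 (I : R -> Prop) : Prop :=
  ~ (exists P0 P1 P2, [/\ is_prime_ideal P0, is_prime_ideal P1, is_prime_ideal P2,
                         subP I P0 & strict_sub P0 P1 /\ strict_sub P1 P2]).

(* [Adm] singles out the ideals allowed in the argument (all ideals in the local case,
   homogeneous ones in the graded case); [m] is the largest proper admissible ideal, and
   [Ps] lists primes over [I] below every admissible prime over [I].  An element [x] of [m]
   outside those [P] in [Ps] that miss [m] is a parameter: a prime [Q] over [I + (x)]
   avoiding some [y] of [m] would give a chain [P < Q < m]. *)
Lemma dim_le1_parameter (m I : R -> Prop) (Adm : (R -> Prop) -> Prop) Ps x :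
  is_prime_ideal m -> is_ideal I -> dim_quotient_le1 I ->
  (forall P, List.In P Ps -> is_prime_ideal P /\ subP I P) ->
  (forall Q, is_prime_ideal Q -> Adm Q -> subP I Q -> exists P, List.In P Ps /\ subP P Q) ->
  (forall Q, is_ideal Q -> Adm Q -> ~ Q 1 -> subP Q m) ->
  (forall Q, is_ideal Q -> Adm Q -> ~ Q 1 ->
     (forall a b, Adm (ideal_add Q (principal a)) -> Adm (ideal_add Q (principal b)) ->
        Q (a * b) -> Q a \/ Q b) -> is_prime_ideal Q) ->
  Adm (ideal_add I (principal x)) -> m x ->
  (forall P, List.In P Ps -> ~ subP m P -> ~ P x) ->
  exists n, subP (ideal_pow m n) (ideal_add I (principal x)).
Proof.
move=> pm hI nochain PsI Pscover Admm Admprime AK mx Psx.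
have hm : is_ideal m by case: pm.
have hK : is_ideal (ideal_add I (principal x)) := ideal_add_ideal hI (principal_ideal x).
apply: pow_sub_of_radical => // y my; apply: NNPP => Kny.
have [Q [hQ AQ KQ Qny Qprime]] := maximal_avoiding_powers hK AK
  (fun k Kyk => Kny (ex_intro _ k Kyk)).
have nQ1 : ~ Q 1 by rewrite -(expr0 y).
have pQ : is_prime_ideal Q by exact: Admprime.
have IQ : subP I Q := subP_trans (ideal_add_principal_l _ hI) KQ.
have [P [inP PQ]] := Pscover Q pQ AQ IQ.
have [pP IP] := PsI P inP.
have Qny1 : ~ Q y by rewrite -(expr1 y).
have [mP|nmP] := classic (subP m P); first by apply/Qny1/PQ/mP.
apply: nochain; exists P, Q, m; split=> //; split; split=> //.
- by exists x; split; [apply: KQ; exact: ideal_add_principal_r|exact: Psx].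
- exact: Admm.
- by exists y.
Qed.

End Noetherian.

(** * Prime avoidance *)

Lemma prime_not_exp {P : R -> Prop} {w} k : is_prime_ideal P -> ~ P w -> ~ P (w ^+ k).
Proof.
case=> _ nP1 Pprime nPw; elim: k => [|k IH]; first by rewrite expr0.
by rewrite exprS => /Pprime [].
Qed.

(* Prime avoidance, abstracted over the elements allowed: [G] (e.g. homogeneous elements of
   positive degree) must be stable under multiplication by [H] and admit a combination
   [y] of [x] and [w] (e.g. [x^i + w^j]) outside every prime containing exactly one of them. *)
Section PrimeAvoidance.
Variables (A : R -> Prop) (Fam : (R -> Prop) -> Prop) (G H : R -> Prop).
Hypothesis hA : is_ideal A.
Hypothesis Fam_prime : forall P, Fam P -> is_prime_ideal P.
Hypothesis GA_nonempty : exists x, G x /\ A x.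
Hypothesis GA_out : forall P, Fam P -> ~ subP A P -> exists a, [/\ G a, A a & ~ P a].
Hypothesis H_out : forall P P', Fam P -> Fam P' -> ~ subP P' P ->
  exists z, [/\ H z, P' z & ~ P z].
Hypothesis GMH : forall a z, G a -> H z -> G (a * z).
Hypothesis G_combine : forall x w, G x -> G w -> A x -> A w -> exists y, [/\ G y, A y,
  (forall P, is_prime_ideal P -> P x -> ~ P w -> ~ P y) &
  (forall P, is_prime_ideal P -> ~ P x -> P w -> ~ P y)].

Lemma avoid_one_in_all (P : R -> Prop) L : Fam P -> ~ subP A P ->
  (forall P', List.In P' L -> Fam P' /\ ~ subP P' P) ->
  exists w, [/\ G w, A w, ~ P w & forall P', List.In P' L -> P' w].
Proof.
move=> FP nAP; elim: L => [|P1 L IH] hL.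
  by have [a [Ga Aa nPa]] := GA_out _ FP nAP; exists a; split.
have [w [Gw Aw nPw Lw]] := IH (fun P' h => hL P' (or_intror h)).
have [FP1 nP1P] := hL P1 (or_introl erefl).
have [z [Hz P1z nPz]] := H_out _ _ FP FP1 nP1P.
have [[hP _ Pprime] [hP1 _ _]] := (Fam_prime _ FP, Fam_prime _ FP1).
exists (w * z); split; [exact: GMH|exact: (idealMr hA)|by move/Pprime => []|].
move=> P' [<-|inP']; first exact: (idealMl hP1).
have [hP' _ _] := Fam_prime _ (proj1 (hL P' (or_intror inP'))).
exact: (idealMr hP' z (Lw P' inP')).
Qed.

Lemma prime_avoidance L : (forall P, List.In P L -> Fam P) ->
  exists x, [/\ G x, A x & forall P, List.In P L -> ~ subP A P -> ~ P x].
Proof.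
move: {2}(List.length L) (leqnn (List.length L)) => n.
elim: n L => [|n IH] [|P L'] //= hlen hL;
  try by have [x [Gx Ax]] := GA_nonempty; exists x; split.
have [x [Gx Ax L'x]] := IH L' hlen (fun P' h => hL P' (or_intror h)).
have FP := hL P (or_introl erefl).
have [AP|nAP] := classic (subP A P); first by exists x; split => // Q [<-|/L'x //] /(_ AP).
have [nPx|/NNPP Px] := classic (~ P x); first by exists x; split => // Q [<-|/L'x].
have [[P' [inP' P'P]]|noP'] := classic (exists P', List.In P' L' /\ subP P' P).
  (* [P] contains another member of the list, so it may be dropped *)
  have [L1 [L2 eL']] := List.in_split _ _ inP'.
  have inL Q : List.In Q (P :: L1 ++ L2) -> List.In Q (P :: L').
    rewrite eL' => -[<-|/(List.in_app_or L1 L2 Q) [h|h]]; [by left|right|right];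
      apply: List.in_or_app; [by left|by right; right].
  have hlen' : (List.length (P :: L1 ++ L2) <= n)%N.
    by move: hlen; rewrite eL' /= !List.length_app /= !plusE addnS.
  have [y [Gy Ay Ly]] := IH _ hlen' (fun Q hQ => hL Q (inL Q hQ)).
  exists y; split => // Q [<-|]; first by apply: Ly; left.
  rewrite eL' => /(List.in_app_or L1 (P' :: L2) Q) [h|[<-|h]].
  - by apply: Ly; right; apply: List.in_or_app; left.
  - by move=> _ /P'P; apply: Ly nAP; left.
  - by apply: Ly; right; apply: List.in_or_app; right.
have [w [Gw Aw nPw L'w]] : exists w, [/\ G w, A w, ~ P w & forall P', List.In P' L' -> P' w].
  apply: avoid_one_in_all => // P' inP'; split; first by apply: hL; right.
  by move=> P'P; apply: noP'; exists P'.
have [y [Gy Ay xy wy]] := G_combine _ _ Gx Gw Ax Aw.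
exists y; split => // Q [<-|inQ] nAQ; first exact: xy _ (Fam_prime _ FP) Px nPw.
by apply: wy _ (Fam_prime _ (hL Q (or_intror inQ))) (L'x Q inQ nAQ) (L'w Q inQ).
Qed.

End PrimeAvoidance.

(** * The local case *)

Lemma maximal_is_prime {M : R -> Prop} : is_maximal_ideal M -> is_prime_ideal M.
Proof.
case=> hM nM1 Mmax; split=> // a b Mab; apply: NNPP => /not_or_and [nMa nMb]; apply: nMb.
have [Ma|[u [_ [Mu [r ->] e]]]] := Mmax _ (ideal_add_ideal hM (principal_ideal a))
  (ideal_add_principal_l _ hM).
  by case: nMa; apply/Ma; exact: ideal_add_principal_r.
have -> : b = u * b + a * b * r by rewrite -{1}[b]mul1r e mulrDl mulrAC.
by apply: (idealD hM); [exact: (idealMr hM)|exact: (idealMr hM)].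
Qed.

Lemma local_parameter (m I : R -> Prop) : noetherian R -> local_ring_with m ->
  is_ideal I -> dim_quotient_le1 I ->
  exists x n, m x /\ subP (ideal_pow m n) (ideal_add I (principal x)).
Proof.
move=> noethR [mmax muniq] hI nochain.
have pm := maximal_is_prime mmax; have [hm _ _] := pm.
have [Ps [PsI Pscover]] := finite_primes_cover noethR hI.
have [x [_ mx Psx]] : exists x, [/\ True, m x & forall P, List.In P Ps -> ~ subP m P -> ~ P x].
  apply: (prime_avoidance m (@is_prime_ideal R) (fun _ => True) (fun _ => True) hm) => //.
  - by exists 0; split=> //; exact: (ideal0 hm).
  - by move=> P _ /not_subP_exists [a [ma nPa]]; exists a.
  - by move=> P P' _ _ /not_subP_exists [z [P'z nPz]]; exists z.
  - move=> a w _ _ ma mw; exists (a + w); split=> //; first exact: (idealD hm).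
      move=> P [hP _ _] Pa nPw Paw; apply/nPw.
      by have := idealB hP Paw Pa; rewrite addrAC subrr add0r.
    by move=> P [hP _ _] nPa Pw Paw; apply/nPa; have := idealB hP Paw Pw; rewrite addrK.
  - by move=> P /PsI [].
suff [n mn] : exists n, subP (ideal_pow m n) (ideal_add I (principal x)) by exists x, n.
apply: (dim_le1_parameter noethR m I (fun _ => True) Ps) => //.
- by move=> Q pQ _; exact: Pscover.
- move=> Q hQ _ nQ1 z Qz; have [M [Mmax QM]] := exists_maximal_over noethR hQ nQ1.
  by apply/(muniq M Mmax); exact: QM.
- by move=> Q hQ _ nQ1 Qprime; split=> // a b; exact: Qprime.
Qed.

(** * The graded case *)

Section Graded.
Variable comp : nat -> R -> R.
Hypothesis grading : is_N_grading comp.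
Hypothesis field0 : degree0_field comp.

Lemma compD n x y : comp n (x + y) = comp n x + comp n y.
Proof. by case: grading. Qed.
Lemma comp_comp n k x : comp n (comp k x) = if n == k then comp k x else 0.
Proof. by case: grading. Qed.
Lemma comp_decomp x :
  exists N, (forall n, (N <= n)%N -> comp n x = 0) /\ x = \sum_(n < N) comp n x.
Proof. by case: grading. Qed.
Lemma comp_mul_comp i j x y : comp (i + j) (comp i x * comp j y) = comp i x * comp j y.
Proof. by case: grading. Qed.
Lemma comp01 : comp 0 1 = 1.
Proof. by case: grading. Qed.
Lemma comp0 n : comp n 0 = 0.
Proof. by apply: (addIr (comp n 0)); rewrite -compD !addr0 add0r. Qed.
Lemma compN n x : comp n (- x) = - comp n x.
Proof. by apply: (addrI (comp n x)); rewrite -compD !subrr comp0. Qed.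
Lemma comp_sum n (I : Type) (r : seq I) (P : pred I) (F : I -> R) :
  comp n (\sum_(i <- r | P i) F i) = \sum_(i <- r | P i) comp n (F i).
Proof. exact: (big_morph (comp n) (compD n) (comp0 n)). Qed.

Definition homog d z := comp d z = z.

Lemma homog_comp n x : homog n (comp n x). Proof. by rewrite /homog comp_comp eqxx. Qed.
Lemma comp_homog {d z} n : homog d z -> comp n z = if n == d then z else 0.
Proof. by rewrite /homog => <-; rewrite comp_comp. Qed.
Lemma homogM d e a b : homog d a -> homog e b -> homog (d + e) (a * b).
Proof. by rewrite /homog => ha hb; rewrite -{1}ha -{1}hb comp_mul_comp ha hb. Qed.
Lemma homogX d a k : homog d a -> homog (k * d) (a ^+ k).
Proof.
move=> ha; elim: k => [|k IH]; first by rewrite /homog expr0 comp01.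
by rewrite exprS mulSn; exact: homogM.
Qed.
Lemma homogD d a b : homog d a -> homog d b -> homog d (a + b).
Proof. by rewrite /homog compD => -> ->. Qed.

Lemma comp_decomp_ge x : exists N0, forall N, (N0 <= N)%N ->
  (forall n, (N <= n)%N -> comp n x = 0) /\ x = \sum_(n < N) comp n x.
Proof.
have [N0 [x0 ex]] := comp_decomp x; exists N0 => N le_N0N.
split=> [n le_Nn|]; first exact/x0/(leq_trans le_N0N).
rewrite {1}ex -(subnKC le_N0N) big_split_ord /= [X in _ + X]big1 ?addr0 //.
by move=> i _; apply: x0; exact: leq_addr.
Qed.

Lemma comp_mul x y : exists N, [/\ forall n, (N <= n)%N -> comp n x = 0,
    forall n, (N <= n)%N -> comp n y = 0 &
    forall n, comp n (x * y) =
      \sum_(k < N) \sum_(l < N) (if n == (k + l)%N then comp k x * comp l y else 0)].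
Proof.
have [Nx hx] := comp_decomp_ge x; have [Ny hy] := comp_decomp_ge y.
have [x0 ex] := hx _ (leq_maxl Nx Ny); have [y0 ey] := hy _ (leq_maxr Nx Ny).
exists (maxn Nx Ny); split => // n.
have -> : x * y = \sum_(k < maxn Nx Ny) \sum_(l < maxn Nx Ny) comp k x * comp l y.
  by rewrite {1}ex {1}ey big_distrl; apply: eq_bigr => k _; exact: big_distrr.
rewrite comp_sum; apply: eq_bigr => k _; rewrite comp_sum; apply: eq_bigr => l _.
by rewrite -comp_mul_comp comp_comp; case: eqP => // ->; rewrite comp_mul_comp.
Qed.

Definition irrelevant : R -> Prop := fun x => comp 0 x = 0.

Lemma irrelevant_ideal : is_ideal irrelevant.
Proof.
split; rewrite /irrelevant; first exact: comp0.
  by move=> x y hx hy; rewrite compD hx hy addr0.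
move=> r x hx; have [N [_ _ ->]] := comp_mul r x.
apply: big1 => k _; apply: big1 => l _; case: eqP => // /esym /eqP.
by rewrite addn_eq0 => /andP [_ /eqP ->]; rewrite hx mulr0.
Qed.

Lemma comp0M a b : comp 0 (a * b) = comp 0 a * comp 0 b.
Proof.
have hI := irrelevant_ideal.
have ha : irrelevant (a - comp 0 a) by rewrite /irrelevant compD compN comp_comp subrr.
have hb : irrelevant (b - comp 0 b) by rewrite /irrelevant compD compN comp_comp subrr.
have -> : a * b = comp 0 a * comp 0 b + (comp 0 a * (b - comp 0 b) + (a - comp 0 a) * b).
  by ring.
rewrite compD (comp_mul_comp 0 0) [X in _ + X](_ : _ = 0) ?addr0 //.
by apply: (idealD hI); [exact: (idealMl hI)|exact: (idealMr hI)].
Qed.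

Lemma irrelevant_prime : is_prime_ideal irrelevant.
Proof.
split; first exact: irrelevant_ideal.
  by rewrite /irrelevant comp01; apply/eqP; exact: oner_neq0.
move=> a b; rewrite /irrelevant comp0M => hab.
have [a0|a0] := eqVneq (comp 0 a) 0; [by left|right].
have [z [_ ez]] := field0 _ (homog_comp 0 a) a0.
by rewrite -[comp 0 b]mul1r -ez mulrAC hab mul0r.
Qed.

Lemma homogeneous_proper_sub_irrelevant Q : is_ideal Q -> homogeneous_ideal comp Q ->
  ~ Q 1 -> subP Q irrelevant.
Proof.
move=> hQ Qhom nQ1 q Qq; apply: NNPP => /eqP q0.
have [z [_ ez]] := field0 _ (homog_comp 0 q) q0.
by apply: nQ1; rewrite -ez; apply: (idealMr hQ); exact: Qhom.
Qed.

Lemma ideal_out_comp {P : R -> Prop} {z} : is_ideal P -> ~ P z -> exists n, ~ P (comp n z).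
Proof.
move=> hP nPz; apply: NNPP => H; apply: nPz.
have [N [_ ->]] := comp_decomp z; apply: (ideal_sum hP) => n _.
by apply: NNPP => h; apply: H; exists n.
Qed.

Lemma homogeneous_add_principal {J a d} : is_ideal J -> homogeneous_ideal comp J ->
  homog d a -> homogeneous_ideal comp (ideal_add J (principal a)).
Proof.
move=> hJ Jhom ha _ n [j [_ [Jj [r ->] ->]]].
have hp := principal_ideal a.
exists (comp n j), (comp n (a * r)); split; [exact: Jhom|idtac|by rewrite compD].
have [N [_ _ ->]] := comp_mul a r.
apply: (ideal_sum hp) => k _; apply: (ideal_sum hp) => l _.
case: ifP => _; last exact: (ideal0 hp).
rewrite (comp_homog k ha); case: ifP => _; first by exists (comp l r).
by rewrite mul0r; exact: (ideal0 hp).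
Qed.

Definition homogeneous_core (P : R -> Prop) : R -> Prop := fun x => forall n, P (comp n x).

Lemma homogeneous_core_sub {P} : is_ideal P -> subP (homogeneous_core P) P.
Proof. by move=> hP x Px; have [N [_ ->]] := comp_decomp x; exact: (ideal_sum hP). Qed.

Lemma homogeneous_core_ideal P : is_ideal P -> is_ideal (homogeneous_core P).
Proof.
move=> hP; split; rewrite /homogeneous_core.
- by move=> n; rewrite comp0; exact: (ideal0 hP).
- by move=> x y hx hy n; rewrite compD; exact: (idealD hP).
- move=> r x hx n; have [N [_ _ ->]] := comp_mul r x.
  apply: (ideal_sum hP) => k _; apply: (ideal_sum hP) => l _.
  by case: ifP => _; [exact: (idealMl hP)|exact: (ideal0 hP)].
Qed.

Lemma homogeneous_core_homogeneous P : is_ideal P ->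
  homogeneous_ideal comp (homogeneous_core P).
Proof.
by move=> hP x n Px k; rewrite comp_comp; case: eqP => _; [exact: Px|exact: (ideal0 hP)].
Qed.

Lemma top_comp_outside {P : R -> Prop} {x} : is_ideal P -> ~ P x ->
  exists i, ~ P (comp i x) /\ forall k, (i < k)%N -> P (comp k x).
Proof.
move=> hP nPx; have [N [x0 _]] := comp_decomp x.
pose out k := if excluded_middle_informative (P (comp k x)) then false else true.
have outP k : out k <-> ~ P (comp k x).
  by rewrite /out; case: excluded_middle_informative.
have [k0 nPk0] := ideal_out_comp hP nPx.
have out_bound k : out k -> (k <= N)%N.
  move=> /outP nPk; rewrite leqNgt; apply/negP => /ltnW /x0 k0x.
  by apply: nPk; rewrite k0x; exact: (ideal0 hP).
have [i /outP nPi imax] := ex_maxnP (ex_intro _ k0 (proj2 (outP k0) nPk0)) out_bound.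
exists i; split=> // k ik; apply: NNPP => /outP /imax.
by rewrite leqNgt ik.
Qed.

(* In degree [i + j] of [a * b], every term other than [a_i b_j] lies in [Q]. *)
Lemma comp_top_product {Q : R -> Prop} {a b i j} : is_ideal Q ->
  (forall k, (i < k)%N -> Q (comp k a)) -> (forall l, (j < l)%N -> Q (comp l b)) ->
  Q (comp (i + j) (a * b)) -> Q (comp i a * comp j b).
Proof.
move=> hQ topa topb; have [N [a0 b0 ->]] := comp_mul a b.
have [Ni|iN] := leqP N i; first by rewrite a0 // mul0r => _; exact: (ideal0 hQ).
have [Nj|jN] := leqP N j; first by rewrite b0 // mulr0 => _; exact: (ideal0 hQ).
rewrite (bigD1 (Ordinal iN)) //= (bigD1 (Ordinal jN)) //= eqxx => hij.
have rest_j : Q (\sum_(l < N | l != Ordinal jN)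
    (if (i + j == i + l)%N then comp i a * comp l b else 0)).
  apply: (ideal_sum hQ) => l lj; case: eqP => [e|_]; last exact: (ideal0 hQ).
  by case/negP: lj; apply/eqP/val_inj => /=; apply/eqP; rewrite -(eqn_add2l i) -e.
have rest_i : Q (\sum_(k < N | k != Ordinal iN) \sum_(l < N)
    (if (i + j == k + l)%N then comp k a * comp l b else 0)).
  apply: (ideal_sum hQ) => k ki; apply: (ideal_sum hQ) => l _.
  case: eqP => [e|_]; last exact: (ideal0 hQ).
  have {}ki : (k : nat) != i by apply: contra ki => /eqP ki; apply/eqP/val_inj.
  case: (ltngtP i k) => [ik|ki'|ike]; last by rewrite ike eqxx in ki.
    by apply: (idealMr hQ); exact: topa.
  by apply: (idealMl hQ); apply: topb; rewrite -(ltn_add2l i) e ltn_add2r.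
by have := idealB hQ (idealB hQ hij rest_i) rest_j; rewrite !addrK.
Qed.

Lemma homogeneous_prime_test Q : is_ideal Q -> homogeneous_ideal comp Q -> ~ Q 1 ->
  (forall a b i j, homog i a -> homog j b -> Q (a * b) -> Q a \/ Q b) -> is_prime_ideal Q.
Proof.
move=> hQ Qhom nQ1 Qprime; split => // a b Qab; apply: NNPP => /not_or_and [nQa nQb].
have [i [nQai topa]] := top_comp_outside hQ nQa.
have [j [nQbj topb]] := top_comp_outside hQ nQb.
have := comp_top_product hQ topa topb (Qhom _ (i + j)%N Qab).
by case/(Qprime _ _ i j (homog_comp i a) (homog_comp j b)).
Qed.

Lemma homog_in_core {P : R -> Prop} {a d} : is_ideal P -> homog d a -> P a ->
  homogeneous_core P a.
Proof. by move=> hP ha Pa n; rewrite (comp_homog n ha); case: ifP => // _; exact: (ideal0 hP). Qed.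

Lemma homogeneous_core_prime P : is_prime_ideal P -> is_prime_ideal (homogeneous_core P).
Proof.
case=> hP nP1 Pprime; apply: homogeneous_prime_test.
- exact: homogeneous_core_ideal.
- exact: homogeneous_core_homogeneous.
- by move/(homogeneous_core_sub hP).
move=> a b i j ha hb /(homogeneous_core_sub hP) /Pprime [Pa|Pb].
  by left; exact: homog_in_core hP ha Pa.
by right; exact: homog_in_core hP hb Pb.
Qed.

Lemma graded_prime_avoidance L :
  (forall P, List.In P L -> is_prime_ideal P /\ homogeneous_ideal comp P) ->
  exists x, [/\ exists d, (0 < d)%N /\ homog d x, irrelevant x &
    forall P, List.In P L -> ~ subP irrelevant P -> ~ P x].
Proof.
have hI := irrelevant_ideal.
apply: (prime_avoidance irrelevant (fun P => is_prime_ideal P /\ homogeneous_ideal comp P)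
  (fun x => exists d, (0 < d)%N /\ homog d x) (fun z => exists e, homog e z) hI).
- by move=> P [].
- by exists 0; split; [exists 1%N; split => //; exact: comp0|exact: (ideal0 hI)].
- move=> P [[hP _ _] _] /not_subP_exists [z [Iz nPz]].
  have [n nPzn] := ideal_out_comp hP nPz.
  have n0 : n != 0%N by apply: contra_notN nPzn => /eqP ->; rewrite Iz; exact: (ideal0 hP).
  exists (comp n z); split=> //; first by exists n; split; [rewrite lt0n|exact: homog_comp].
  by rewrite /irrelevant comp_comp eq_sym (negbTE n0).
- move=> P P' [[hP _ _] _] [_ P'hom] /not_subP_exists [z [P'z nPz]].
  have [n nPzn] := ideal_out_comp hP nPz.
  by exists (comp n z); split => //; [exists n; exact: homog_comp|exact: P'hom].
- move=> a z [d [d_gt0 ha]] [e hz]; exists (d + e)%N.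
  by rewrite addn_gt0 d_gt0; split=> //; exact: homogM.
move=> a w [da [da_gt0 ha]] [dw [dw_gt0 hw]] Ia Iw.
(* a prime containing exactly one of [a], [w] misses the homogeneous element [a^dw + w^da] *)
exists (a ^+ dw + w ^+ da); split.
- exists (dw * da)%N; rewrite muln_gt0 da_gt0 dw_gt0; split=> //.
  by apply: homogD; [exact: homogX|rewrite mulnC; exact: homogX].
- by rewrite -(prednK dw_gt0) -(prednK da_gt0); apply: (idealD hI); exact: (idealXS hI).
- move=> P pP Pa nPw Psum; case: (pP) => hP _ _.
  apply: (prime_not_exp da pP nPw).
  have := idealB hP Psum (idealXS hP dw.-1 Pa).
  by rewrite prednK // addrAC subrr add0r.
- move=> P pP nPa Pw Psum; case: (pP) => hP _ _.
  apply: (prime_not_exp dw pP nPa).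
  by have := idealB hP Psum (idealXS hP da.-1 Pw); rewrite prednK // addrK.
Qed.

Lemma graded_parameter (I : R -> Prop) : noetherian R -> homogeneous_ideal comp I ->
  is_ideal I -> dim_quotient_le1 I ->
  exists x n, irrelevant x /\ subP (ideal_pow irrelevant n) (ideal_add I (principal x)).
Proof.
move=> noethR Ihom hI nochain.
have [Ps [PsI Pscover]] := finite_primes_cover noethR hI.
pose Ps' := List.map homogeneous_core Ps.
have Ps'I P : List.In P Ps' -> [/\ is_prime_ideal P, homogeneous_ideal comp P & subP I P].
  case/List.in_map_iff => P0 [<- /PsI [pP0 IP0]]; have [hP0 _ _] := pP0.
  split; [exact: homogeneous_core_prime|exact: homogeneous_core_homogeneous|].
  by move=> z Iz n; apply: IP0; exact: Ihom.
have Ps'hom P : List.In P Ps' -> is_prime_ideal P /\ homogeneous_ideal comp P.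
  by case/Ps'I.
have [x [[d [_ xd]] Irr_x Ps'x]] := graded_prime_avoidance Ps' Ps'hom.
suff [n hn] : exists n, subP (ideal_pow irrelevant n) (ideal_add I (principal x)).
  by exists x, n.
apply: (dim_le1_parameter noethR irrelevant I (homogeneous_ideal comp) Ps') => //.
- exact: irrelevant_prime.
- by move=> P /Ps'I [].
- move=> Q pQ Qhom IQ; have [P [inP PQ]] := Pscover Q pQ IQ.
  have [[hP _ _] _] := PsI P inP.
  exists (homogeneous_core P); split; first exact: List.in_map.
  exact: subP_trans (homogeneous_core_sub hP) PQ.
- by move=> Q hQ Qhom nQ1; exact: homogeneous_proper_sub_irrelevant.
- move=> Q hQ Qhom nQ1 Qprime; apply: homogeneous_prime_test => // a b i j ha hb.
  by apply: Qprime; [exact: homogeneous_add_principal hQ Qhom ha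
                    |exact: homogeneous_add_principal hQ Qhom hb].
- exact: homogeneous_add_principal hI Ihom xd.
Qed.

End Graded.
End IdealAlgebra.

Theorem mainTheorem16 (R : comNzRingType) (p : nat) (m I : R -> Prop) :
  p \in [pchar R] ->
  noetherian R ->
  (local_ring_with m \/
   exists comp : nat -> R -> R,
     [/\ is_N_grading comp, degree0_field comp,
         (forall x, m x <-> comp 0%N x = 0) & homogeneous_ideal comp I]) ->
  is_ideal I ->
  dim_quotient_eq1 I ->
  (exists c : nat, (0 < c)%N /\
     forall e : nat,
       subP (ideal_mul (ideal_pow m (c * p ^ e)%N)
                          (saturation (frob_pow I (p ^ e)%N) m))
               (frob_pow I (p ^ e)%N)) ->
  exists b : nat, (0 < b)%N /\
    forall (e : nat) (x : R),
      (ideal_pow m (b * p ^ e)%N x /\ saturation (frob_pow I (p ^ e)%N) m x) <->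
      (ideal_pow m (b * p ^ e)%N x /\ frob_pow I (p ^ e)%N x).
Proof.
move=> pcharp noethR local_or_graded hI [_ dimI] [c [_ hc]].
have [hm [x [n [mx mn]]]] :
    is_ideal m /\ exists x n, m x /\ subP (ideal_pow m n) (ideal_add I (principal x)).
  case: local_or_graded => [mloc|[comp [grading field0 mcomp Ihom]]].
    by split; [case: mloc => -[]|exact: local_parameter].
  have -> : m = irrelevant comp.
    by apply: functional_extensionality => z; exact: propositional_extensionality.
  split; first exact: irrelevant_ideal.
  exact: graded_parameter.
have [s hs] := noethR I hI.
have p_gt0 : (0 < p)%N by apply: prime_gt0; exact: pcharf_prime pcharp.
exists (n.+1 * c.+1 * (size s).+2)%N; split=> [|e y]; first by rewrite !muln_gt0.
split=> -[my yI]; split=> //; last exact: sub_saturation (frob_pow_ideal I _) y yI.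
by apply: frob_sat_sub hm hI hs mx mn _ (hc e) y my yI; rewrite expn_gt0 p_gt0.
Qed.
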